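(* Let $N\ge1$ and $T=1$, and let $q$ be the normalized polynomial defined in the context. Then $$q(z)=2\tan\frac{\pi}{2(N+1)}\sum_{j=1}^{N}\Bigl(1-\frac{j}{N+1}\Bigr)\sin\frac{\pi j}{N+1}\,z^{j-1},$$ and $q(-1)=\tan^2\frac{\pi}{2(N+1)}$.
   Context: Fix integers $T\ge 1$, $N\ge1$. Set $\psi_j=\dfrac{\pi(2+T(2j-1))}{2+(N-1)T}$. Define $\eta(z)=z(z+1)\prod_{j=1}^{\frac{N-2}{2}}(z-e^{i\psi_j})(z-e^{-i\psi_j})$ if $N$ is even, and $\eta(z)=z\prod_{j=1}^{\frac{N-1}{2}}(z-e^{i\psi_j})(z-e^{-i\psi_j})$ if $N$ is odd (empty products equal $1$). Let $$q(z)=\frac{KT}{2+(N-1)T}\left(\Bigl(\frac1T+N\Bigr)\frac{\eta(z)}{z}-\eta'(z)\right),$$ where the constant $K$ is chosen so that $q(1)=1$. *)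

From Stdlib Require Import Reals List Arith.
Import ListNotations.
Open Scope R_scope.

Record Cx := mkC { Re : R; Im : R }.

Definition RtoC (x : R) : Cx := mkC x 0.
Definition Czero : Cx := RtoC 0.
Definition Cone : Cx := RtoC 1.
Definition Cadd (a b : Cx) : Cx := mkC (Re a + Re b) (Im a + Im b).
Definition Copp (a : Cx) : Cx := mkC (- Re a) (- Im a).
Definition Cmul (a b : Cx) : Cx :=
  mkC (Re a * Re b - Im a * Im b) (Re a * Im b + Im a * Re b).
Fixpoint Cpow (a : Cx) (n : nat) : Cx :=
  match n with O => Cone | S k => Cmul a (Cpow a k) end.
Definition Cexpi (theta : R) : Cx := mkC (cos theta) (sin theta).

(* ---------- polynomials: list of coefficients, constant term first ---------- *)
Definition poly := list Cx.

Fixpoint padd (p q : poly) : poly :=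
  match p, q with
  | [], _ => q
  | _, [] => p
  | a :: p', b :: q' => Cadd a b :: padd p' q'
  end.

Definition pscale (c : Cx) (p : poly) : poly := map (Cmul c) p.

Fixpoint pmul (p q : poly) : poly :=
  match p with
  | [] => []
  | a :: p' => padd (pscale a q) (Czero :: pmul p' q)
  end.

Definition pconst (c : Cx) : poly := [c].
Definition pX : poly := [Czero; Cone].
Definition pXsub (a : Cx) : poly := [Copp a; Cone].

Fixpoint pderiv_aux (k : nat) (p : poly) : poly :=
  match p with
  | [] => []
  | a :: p' => Cmul (RtoC (INR k)) a :: pderiv_aux (S k) p'
  end.
Definition pderiv (p : poly) : poly :=
  match p with [] => [] | _ :: p' => pderiv_aux 1 p' end.

(* division by z of a polynomial with zero constant term *)
Definition pdivX (p : poly) : poly := tl p.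

Fixpoint peval (p : poly) (z : Cx) : Cx :=
  match p with
  | [] => Czero
  | a :: p' => Cadd a (Cmul z (peval p' z))
  end.

Fixpoint pprod1 (n : nat) (f : nat -> poly) : poly :=
  match n with O => [Cone] | S k => pmul (pprod1 k f) (f (S k)) end.

Fixpoint Csum1 (n : nat) (f : nat -> Cx) : Cx :=
  match n with O => Czero | S k => Cadd (Csum1 k f) (f (S k)) end.

Definition psi (T N j : nat) : R :=
  PI * (2 + INR T * (2 * INR j - 1)) / (2 + (INR N - 1) * INR T).

Definition pairfac (T N j : nat) : poly :=
  pmul (pXsub (Cexpi (psi T N j))) (pXsub (Cexpi (- psi T N j))).

Definition eta (T N : nat) : poly :=
  if Nat.even N then
    pmul (pmul pX (pXsub (Copp Cone))) (pprod1 ((N - 2) / 2) (pairfac T N))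
  else
    pmul pX (pprod1 ((N - 1) / 2) (pairfac T N)).

(* q with normalizing constant K (K is chosen in the statement so q(1) = 1) *)
Definition q (T N : nat) (K : Cx) : poly :=
  pscale (Cmul K (RtoC (INR T / (2 + (INR N - 1) * INR T))))
    (padd (pscale (RtoC (1 / INR T + INR N)) (pdivX (eta T N)))
          (pscale (Copp Cone) (pderiv (eta T N)))).

(* With T = 1 the angles are psi_j = (2j+1)a, a = pi/(N+1), so the quadratic
   factors z^2 - 2 cos(psi_j) z + 1 of eta (together with z + 1 when N is even,
   and the factor j = 0 that eta omits) are pairwise coprime monic divisors of
   z^(N+1) + 1 of total degree N + 1.  Hence eta(z)/z is the quotient of
   z^(N+1) + 1 by z^2 - 2 cos(a) z + 1, which by the Chebyshev recurrence is
   sum_(i<N) U_i z^i with U_i = sin((i+1)a)/sin a.  Then q is proportional to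
   sum_(i<N) (N - i) U_i z^i.  Differentiating (eta/z)(z^2 - 2 cos(a) z + 1) =
   z^(N+1) + 1 at z = 1 and z = -1 evaluates q there; q(1) = 1 fixes K, and
   q(-1) = (1 - cos a)/(1 + cos a) = tan^2(a/2). *)

From mathcomp Require Import all_boot all_order all_algebra.
From mathcomp Require Import Rstruct.
From mathcomp.real_closed Require Import complex.
From Pilot Require Import Defs.
From Stdlib Require Import Reals Lra.

Local Open Scope R_scope.

Definition root_angle (N j : nat) : R := (2 * INR j + 1) * PI / (INR N + 1).

(* [chebU t n] is the Chebyshev value U_(n-1)(cos t): note the index shift. *)
Definition chebU (t : R) (n : nat) : R := sin (INR n * t) / sin t.

Lemma chebU0 t : chebU t 0 = 0.
Proof. by rewrite /chebU Rmult_0_l sin_0 /Rdiv Rmult_0_l. Qed.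

Lemma chebU1 t : sin t <> 0 -> chebU t 1 = 1.
Proof. by move=> st; rewrite /chebU Rmult_1_l; field. Qed.

Lemma chebUSS t n : chebU t n.+2 = 2 * cos t * chebU t n.+1 - chebU t n.
Proof.
rewrite /chebU.
have -> : INR n.+2 * t = INR n.+1 * t + t by rewrite (S_INR n.+1); ring.
have -> : INR n * t = INR n.+1 * t - t by rewrite (S_INR n); ring.
by rewrite sin_plus sin_minus /Rdiv; ring.
Qed.

Lemma psi_root_angle N j : psi 1 N j = root_angle N j.
Proof. rewrite /psi /root_angle /=; field; have := pos_INR N; lra. Qed.

Lemma root_angle0 N : root_angle N 0 = 2 * (PI / (2 * (INR N + 1))).
Proof. rewrite /root_angle /=; field; have := pos_INR N; lra. Qed.

Section RootAngle.
Variables N j : nat.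
Hypothesis j_small : (j.*2 < N)%nat.

Lemma root_angle_bounds : 0 < root_angle N j < PI.
Proof.
have hj : 2 * INR j + 1 <= INR N.
  by move/leP/le_INR: j_small; rewrite S_INR -addnn plus_INR; lra.
have := pos_INR j; have := PI_RGT_0 => hP hj0.
split; first by apply: Rdiv_lt_0_compat; nra.
have -> : root_angle N j = PI - PI * (INR N - 2 * INR j) / (INR N + 1).
  by rewrite /root_angle; field; lra.
suff : 0 < PI * (INR N - 2 * INR j) / (INR N + 1) by lra.
by apply: Rdiv_lt_0_compat; nra.
Qed.

Lemma sin_root_angle_gt0 : 0 < sin (root_angle N j).
Proof. by have [? ?] := root_angle_bounds; apply: sin_gt_0. Qed.

Lemma chebU_root_angle : chebU (root_angle N j) N = 1.
Proof.
have st := sin_root_angle_gt0; rewrite /chebU.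
have -> : INR N * root_angle N j = PI - root_angle N j + 2 * INR j * PI.
  by rewrite /root_angle; field; have := pos_INR N; lra.
by rewrite sin_period sin_PI_x; field; lra.
Qed.

Lemma cos_root_angle_add1_neq0 : cos (root_angle N j) + 1 <> 0.
Proof.
move=> cos_eq; have [? ?] := root_angle_bounds.
have : root_angle N j = PI by apply: cos_inj; rewrite ?cos_PI; lra.
lra.
Qed.

End RootAngle.

Lemma chebU_root_angle_succ N j : chebU (root_angle N j) N.+1 = 0.
Proof.
rewrite /chebU.
have -> : INR N.+1 * root_angle N j = PI + 2 * INR j * PI.
  by rewrite S_INR /root_angle; field; have := pos_INR N; lra.
by rewrite sin_period sin_PI /Rdiv Rmult_0_l.
Qed.

Lemma cos_root_angle_inj N i j : (i.*2 < N)%nat -> (j.*2 < N)%nat ->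
  cos (root_angle N i) = cos (root_angle N j) -> i = j.
Proof.
move=> hi hj eq_cos; apply: INR_eq.
have [? ?] := root_angle_bounds _ _ hi; have [? ?] := root_angle_bounds _ _ hj.
have : root_angle N i = root_angle N j by apply: cos_inj => //; lra.
rewrite /root_angle => eq_angle.
have := PI_RGT_0; have := pos_INR N => ? ?.
have : (2 * INR i + 1) * PI = (2 * INR j + 1) * PI.
  by apply: (Rmult_eq_reg_r (/ (INR N + 1))); [exact: eq_angle | apply: Rinv_neq_0_compat; lra].
nra.
Qed.

Lemma two_tan_half x : cos x <> 0 -> sin x <> 0 ->
  (2 - 2 * cos (2 * x)) / sin (2 * x) = 2 * tan x.
Proof. by move=> cx sx; rewrite cos_2a_sin sin_2a /tan; field. Qed.

Lemma tan_sqr_half x : cos x <> 0 ->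
  (2 - 2 * cos (2 * x)) / (2 + 2 * cos (2 * x)) = tan x ^ 2.
Proof.
move=> cx; have := sin2_cos2 x; rewrite /Rsqr cos_2a_sin /tan => pyth.
have -> : 2 + 2 * (1 - 2 * sin x * sin x) = 4 * (cos x * cos x) by lra.
by field.
Qed.

Section HalfAngle.
Variable N : nat.
Hypothesis N_gt0 : (0 < N)%nat.
Let beta := PI / (2 * (INR N + 1)).

Lemma half_angle_bounds : 0 < beta < PI / 2.
Proof.
have := PI_RGT_0; have : 1 <= INR N by move/leP/le_INR: N_gt0.
rewrite /beta => ? ?; split; first by apply: Rdiv_lt_0_compat; lra.
have -> : PI / (2 * (INR N + 1)) = PI / 2 - PI * INR N / (2 * (INR N + 1)).
  by field; lra.
suff : 0 < PI * INR N / (2 * (INR N + 1)) by lra.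
by apply: Rdiv_lt_0_compat; nra.
Qed.

Lemma cos_half_angle_gt0 : 0 < cos beta.
Proof. by have [? ?] := half_angle_bounds; apply: cos_gt_0; lra. Qed.

Lemma sin_half_angle_gt0 : 0 < sin beta.
Proof. by have [? ?] := half_angle_bounds; apply: sin_gt_0; lra. Qed.

End HalfAngle.

Lemma q_coef_eq N i : (0 < N)%nat ->
  (2 - 2 * cos (root_angle N 0)) / INR N.+1
    * ((INR N - INR i) * chebU (root_angle N 0) i.+1)
  = 2 * tan (PI / (2 * (INR N + 1)))
      * ((1 - INR i.+1 / (INR N + 1)) * sin (PI * INR i.+1 / (INR N + 1))).
Proof.
move=> N_gt0; have := cos_half_angle_gt0 _ N_gt0; have := sin_half_angle_gt0 _ N_gt0.
have := pos_INR N; rewrite /chebU root_angle0 => ? ? ?.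
have -> : PI * INR i.+1 / (INR N + 1) = INR i.+1 * (2 * (PI / (2 * (INR N + 1)))).
  by field; lra.
rewrite -two_tan_half ?sin_2a; try lra.
rewrite !S_INR; field; split; [nra | lra].
Qed.

Lemma pmul_pXsub_Cexpi t :
  pmul (pXsub (Cexpi t)) (pXsub (Cexpi (- t))) = [:: Cone; RtoC (- (2 * cos t)); Cone].
Proof.
have := sin2_cos2 t; rewrite /Rsqr => pyth.
rewrite /pXsub /Cexpi /= cos_neg sin_neg /Cmul /Cadd /RtoC /Cone /Czero /=.
by congr [:: mkC _ _; mkC _ _; mkC _ _]; nra.
Qed.

Lemma q_scale_T1 N : INR 1 / (2 + (INR N - 1) * INR 1) = / INR N.+1.
Proof. by rewrite (S_INR N) INR_1; field; have := pos_INR N; lra. Qed.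

Lemma q_weight_T1 N : 1 / INR 1 + INR N = INR N.+1.
Proof. by rewrite (S_INR N) INR_1; field. Qed.

(* Loaded only now: MathComp's [ring] would shadow the Stdlib tactic on [R]. *)
From mathcomp Require Import ring zify.

Import GRing.Theory Num.Theory.
Local Open Scope ring_scope.

Lemma coprimep_lin_comb (F : idomainType) (p r u v : {poly F}) (k : F) :
  k != 0 -> u * p + v * r = k%:P -> coprimep p r.
Proof. by move=> k_neq0 uv; apply/Bezout_coprimepP; exists (u, v); rewrite /= uv polyC_eqp1. Qed.

Lemma coprimep_prodr (F : idomainType) n (p : nat -> {poly F}) (g : {poly F}) :
  (forall i, (i < n)%nat -> coprimep g (p i)) -> coprimep g (\prod_(i < n) p i).
Proof.
elim: n => [|n IH] cop; first by rewrite big_ord0 coprimep1.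
rewrite big_ord_recr coprimepMr cop // andbT.
by apply: IH => i ltin; apply: cop; apply: ltnW.
Qed.

Lemma dvdp_prod_coprime (F : idomainType) n (p : nat -> {poly F}) (f : {poly F}) :
  (forall i, (i < n)%nat -> p i %| f) ->
  (forall i j, (i < j < n)%nat -> coprimep (p i) (p j)) ->
  \prod_(i < n) p i %| f.
Proof.
elim: n => [|n IH] dvd cop; first by rewrite big_ord0 dvd1p.
have dvd_prod : \prod_(i < n) p i %| f.
  apply: IH => [i ltin | i j /andP[ltij ltjn]]; first by apply: dvd; apply: ltnW.
  by apply: cop; rewrite ltij ltnW.
have cop_prod : coprimep (\prod_(i < n) p i) (p n).
  rewrite coprimep_sym; apply: coprimep_prodr => i ltin; rewrite coprimep_sym.
  by apply: cop; rewrite ltin ltnSn.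
by rewrite big_ord_recr Gauss_dvdp // dvd_prod dvd.
Qed.

Lemma monic_dvdp_eq (F : idomainType) (p f : {poly F}) :
  p \is monic -> f \is monic -> p %| f -> size p = size f -> p = f.
Proof.
move=> mp mf dvd eq_size; apply/eqP.
by rewrite -eqp_monic // -dvdp_size_eqp // eq_size.
Qed.

Section ReciprocalQuadratic.
Context {F : numFieldType}.
Implicit Types (c d x : F).

Definition recip_quad c : {poly F} := 'X^2 - (2%:R * c)%:P * 'X + 1.

Lemma size_recip_quad c : size (recip_quad c) = 3%nat.
Proof.
have -> : recip_quad c = ('X - (2%:R * c)%:P) * 'X + 1%:P by rewrite /recip_quad; ring.
by rewrite size_MXaddC size_XsubC oner_eq0 andbF.
Qed.

Lemma recip_quad_monic c : recip_quad c \is monic.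
Proof.
rewrite monicE lead_coefE size_recip_quad /recip_quad.
by rewrite coefD coefB coefXn coefMX coefC coef1 /= subr0 addr0.
Qed.

Lemma recip_quad_neq0 c : recip_quad c != 0.
Proof. exact: monic_neq0 (recip_quad_monic c). Qed.

Lemma monic_prod_recip_quad n (c : nat -> F) :
  \prod_(i < n) recip_quad (c i) \is monic.
Proof. by apply: monic_prod => i _; apply: recip_quad_monic. Qed.

Lemma coprimep_recip_quad c d : c != d -> coprimep (recip_quad c) (recip_quad d).
Proof.
move=> neq_cd; pose k := 2%:R * (d - c).
apply: (@coprimep_lin_comb _ _ _ (k%:P - ('X - (2%:R * c)%:P)) ('X - (2%:R * c)%:P) k).
  by rewrite mulf_neq0 ?pnatr_eq0 // subr_eq0 eq_sym.
by rewrite /recip_quad /k !polyCM polyCB; ring.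
Qed.

Lemma coprimep_XaddC_recip_quad c : c + 1 != 0 -> coprimep ('X + 1) (recip_quad c).
Proof.
move=> c1_neq0; pose k := 2%:R * (1 + c).
apply: (@coprimep_lin_comb _ _ _ (- ('X - 1 - (2%:R * c)%:P)) 1 k).
  by rewrite mulf_neq0 ?pnatr_eq0 // addrC.
by rewrite /recip_quad /k !polyCM polyCD; ring.
Qed.

Lemma size_prod_recip_quad n (c : nat -> F) :
  size (\prod_(i < n) recip_quad (c i)) = (n.*2).+1.
Proof.
elim: n => [|n IH]; first by rewrite big_ord0 size_poly1.
rewrite big_ord_recr size_monicM ?monic_prod_recip_quad ?recip_quad_neq0 //.
by rewrite IH size_recip_quad; lia.
Qed.

Lemma recip_quad_deriv_unit c x : x ^+ 2 = 1 ->
  x * (recip_quad c)^`().[x] = (recip_quad c).[x].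
Proof.
move=> x2; rewrite /recip_quad !derivE !hornerE -[X in _ = _ + X]x2; ring.
Qed.

Lemma chebyshev_sum_mul c (s : nat -> F) n :
  s 0%nat = 0 -> s 1%nat = 1 -> (forall k, s k.+2 = 2%:R * c * s k.+1 - s k) ->
  (\sum_(i < n) (s i.+1)%:P * 'X^i) * recip_quad c
  = 1 - (s n.+1)%:P * 'X^n + (s n)%:P * 'X^(n.+1).
Proof.
move=> s0 s1 sSS; elim: n => [|n IH]; first by rewrite big_ord0 s0 s1 mul0r; ring.
by rewrite big_ord_recr /= mulrDl IH sSS /recip_quad polyCB !polyCM !exprS; ring.
Qed.

End ReciprocalQuadratic.

Section EulerShift.
Context {R : comNzRingType}.

Definition euler_shift n (p : {poly R}) := n%:R *: p - 'X * p^`().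

Lemma euler_shift_sum n k (a : nat -> R) :
  euler_shift n (\sum_(i < k) (a i)%:P * 'X^i)
  = \sum_(i < k) ((n%:R - i%:R) * a i)%:P * 'X^i.
Proof.
elim: k => [|k IH]; first by rewrite !big_ord0 /euler_shift deriv0 scaler0 mulr0 subr0.
move: IH; rewrite /euler_shift !big_ord_recr /= derivD scalerDr => IH.
rewrite mulrDr opprD addrACA IH derivM derivC mul0r add0r derivXn.
case: k {IH} => [|k]; first by rewrite expr0 polyCM polyCB -!mul_polyC; ring.
by rewrite -!mul_polyC polyCM polyCB /= !exprS !polyC_natr -mulr_natr; ring.
Qed.

Lemma horner_euler_shift n (E D : {poly R}) x :
  E * D = 'X^(n.+1) + 1 -> x * D^`().[x] = D.[x] ->
  (euler_shift n E).[x] * D.[x] = n.+1%:R.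
Proof.
move=> ED xD.
have EDx : E.[x] * D.[x] = x ^+ n.+1 + 1 by rewrite -hornerM ED !hornerE.
have ED' : E^`().[x] * D.[x] + E.[x] * D^`().[x] = n.+1%:R * x ^+ n.
  rewrite -!hornerM -hornerD -derivM ED derivD derivXn -polyC1 derivC.
  by rewrite hornerD hornerMn hornerXn hornerC addr0 mulr_natl.
rewrite /euler_shift !hornerE; transitivity (n%:R * (E.[x] * D.[x])
  - x * (E^`().[x] * D.[x] + E.[x] * D^`().[x]) + E.[x] * (x * D^`().[x])); first ring.
by rewrite ED' xD EDx exprS; ring.
Qed.
End EulerShift.

Local Open Scope complex_scope.

Definition cplx (a : Cx) : R[i] := Defs.Re a +i* Defs.Im a.

Lemma cplx_inj : injective cplx.
Proof. by case=> [? ?] [? ?] [-> ->]. Qed.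

Lemma cplx_RtoC r : cplx (RtoC r) = r%:C.
Proof. by []. Qed.

Lemma cplx_add a b : cplx (Cadd a b) = cplx a + cplx b.
Proof. by case: a => ? ?; case: b. Qed.

Lemma cplx_mul a b : cplx (Cmul a b) = cplx a * cplx b.
Proof. by case: a => ? ?; case: b => ? ?; rewrite /cplx /= !RplusE !RmultE !RminusE. Qed.

Lemma cplx_opp a : cplx (Copp a) = - cplx a.
Proof. by case: a. Qed.

Lemma cplx0 : cplx Czero = 0. Proof. by []. Qed.
Lemma cplx1 : cplx Cone = 1. Proof. by []. Qed.

Lemma cplx_pow a n : cplx (Cpow a n) = cplx a ^+ n.
Proof. by elim: n => [|n IH] /=; rewrite ?expr0 // cplx_mul IH exprS. Qed.

Lemma cplx_sum n (g : nat -> Cx) : cplx (Csum1 n g) = \sum_(i < n) cplx (g i.+1).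
Proof. by elim: n => [|n IH] /=; rewrite ?big_ord0 // cplx_add IH big_ord_recr. Qed.

Fixpoint cpoly (p : Defs.poly) : {poly R[i]} :=
  if p is a :: p' then cpoly p' * 'X + (cplx a)%:P else 0.

Lemma horner_cpoly p z : cplx (peval p z) = (cpoly p).[cplx z].
Proof.
elim: p => [|a p IH] /=; first by rewrite horner0.
by rewrite cplx_add cplx_mul IH !hornerE; ring.
Qed.

Lemma cpoly_padd p r : cpoly (padd p r) = cpoly p + cpoly r.
Proof.
elim: p r => [|a p IH] [|b r] //=; rewrite ?add0r ?addr0 //.
by rewrite IH cplx_add polyCD; ring.
Qed.

Lemma cpoly_pscale c p : cpoly (pscale c p) = cplx c *: cpoly p.
Proof.
elim: p => [|a p IH] /=; first by rewrite scaler0.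
by rewrite IH cplx_mul polyCM -!mul_polyC; ring.
Qed.

Lemma cpoly_pmul p r : cpoly (pmul p r) = cpoly p * cpoly r.
Proof.
elim: p => [|a p IH] /=; first by rewrite mul0r.
by rewrite cpoly_padd cpoly_pscale /= IH cplx0 addr0 -mul_polyC; ring.
Qed.

Lemma cpoly_pderiv_aux k p :
  cpoly (pderiv_aux k p) = k%:R *: cpoly p + 'X * (cpoly p)^`().
Proof.
elim: p k => [|a p IH] k /=; first by rewrite deriv0 scaler0 mulr0 addr0.
rewrite IH cplx_mul cplx_RtoC INRE rmorph_nat derivMXaddC.
by rewrite -!mul_polyC polyCM !polyC_natr -addn1 natrD; ring.
Qed.

Lemma cpoly_pderiv p : cpoly (pderiv p) = (cpoly p)^`().
Proof.
case: p => [|a p] /=; first by rewrite deriv0.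
by rewrite cpoly_pderiv_aux derivMXaddC scale1r mulrC.
Qed.

Lemma cpoly_pdivX p E : cpoly p = 'X * E -> cpoly (pdivX p) = E.
Proof.
case: p => [|a p] /= pE.
  by move/esym/eqP: pE; rewrite mulf_eq0 polyX_eq0 => /eqP <-.
have a0 : cplx a = 0.
  by have := congr1 (fun r : {poly R[i]} => r`_0) pE; rewrite /= coefD coefMX coefC coefXM add0r.
by move: pE; rewrite a0 polyC0 addr0 [RHS]mulrC; apply: mulIf; rewrite polyX_eq0.
Qed.

Lemma cpoly_pprod1 n (g : nat -> Defs.poly) :
  cpoly (pprod1 n g) = \prod_(j < n) cpoly (g j.+1).
Proof.
elim: n => [|n IH] /=; first by rewrite big_ord0 cplx1 mul0r add0r.
by rewrite cpoly_pmul IH big_ord_recr.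
Qed.

Lemma cpoly_pX : cpoly pX = 'X.
Proof. by rewrite /= cplx0 cplx1 mul0r add0r mul1r addr0. Qed.

Lemma cpoly_pXsub a : cpoly (pXsub a) = 'X - (cplx a)%:P.
Proof. by rewrite /= cplx1 cplx_opp polyCN mul0r add0r mul1r. Qed.

Lemma realC2 : (IZR 2)%:C = 2%:R :> R[i].
Proof. by rewrite IZRposE INRE rmorph_nat. Qed.

Section Main.
Variable N : nat.
Hypothesis N_gt0 : (0 < N)%nat.

Let f : {poly R[i]} := 'X^(N.+1) + 1.
Let cosC j : R[i] := (cos (root_angle N j))%:C.
Let cheb_quot j : {poly R[i]} :=
  \sum_(i < N) ((chebU (root_angle N j) i.+1)%:C)%:P * 'X^i.

Lemma cheb_quot_mul j : (j.*2 < N)%nat -> cheb_quot j * recip_quad (cosC j) = f.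
Proof.
move=> j_small; have s_neq0 := Rgt_not_eq _ _ (sin_root_angle_gt0 _ _ j_small).
rewrite (@chebyshev_sum_mul _ _ (fun n => (chebU (root_angle N j) n)%:C)).
- by rewrite chebU_root_angle_succ chebU_root_angle // rmorph0 rmorph1 /f; ring.
- by rewrite chebU0 rmorph0.
- by rewrite chebU1 // rmorph1.
by move=> k; rewrite chebUSS -realC2 -!rmorphM -rmorphB.
Qed.

Lemma cosC_inj i j : (i.*2 < N)%nat -> (j.*2 < N)%nat -> cosC i = cosC j -> i = j.
Proof. by move=> hi hj /fmorph_inj; apply: cos_root_angle_inj. Qed.

Lemma cosC_add1_neq0 j : (j.*2 < N)%nat -> cosC j + 1 != 0.
Proof.
move=> j_small; rewrite -(rmorph1 (real_complex R)) -rmorphD fmorph_eq0.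
exact/eqP/cos_root_angle_add1_neq0.
Qed.

Lemma prod_recip_quad_dvdp k : (k.*2 < N)%nat -> \prod_(j < k.+1) recip_quad (cosC j) %| f.
Proof.
move=> k_small; have small j : (j < k.+1)%nat -> (j.*2 < N)%nat.
  by move=> ltjk; apply: leq_ltn_trans k_small; rewrite leq_double -ltnS.
apply: (@dvdp_prod_coprime _ _ (fun j => recip_quad (cosC j))).
  by move=> j /small j_small; rewrite -(cheb_quot_mul _ j_small) dvdp_mull.
move=> i j /andP[ltij ltjk].
apply: coprimep_recip_quad; apply/eqP.
move/(cosC_inj _ _ (small _ (ltn_trans ltij ltjk)) (small _ ltjk)) => eq_ij.
by rewrite eq_ij ltnn in ltij.
Qed.

Lemma prod_recip_quad_odd k : N = (k.*2).+1 -> \prod_(j < k.+1) recip_quad (cosC j) = f.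
Proof.
move=> Nk; apply: monic_dvdp_eq.
- exact: monic_prod_recip_quad.
- exact: monicXnaddC.
- by apply: prod_recip_quad_dvdp; rewrite Nk.
by rewrite size_prod_recip_quad /f size_XnaddC Nk; lia.
Qed.

Lemma prod_recip_quad_even k :
  N = (k.*2).+2 -> ('X + 1) * \prod_(j < k.+1) recip_quad (cosC j) = f.
Proof.
move=> Nk; have k_small : (k.*2 < N)%nat by rewrite Nk.
have XaddC_dvdp : 'X + 1 %| f.
  have -> : 'X + 1 = 'X - (-1)%:P :> {poly R[i]} by rewrite polyCN opprK.
  rewrite -root_factor_theorem /root /f !hornerE.
  by rewrite -signr_odd Nk /= odd_double expr1 addNr.
have XaddC_coprime : coprimep ('X + 1) (\prod_(j < k.+1) recip_quad (cosC j)).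
  apply: (@coprimep_prodr _ _ (fun j => recip_quad (cosC j))) => j ltjk.
  apply/coprimep_XaddC_recip_quad/cosC_add1_neq0.
  by apply: leq_ltn_trans k_small; rewrite leq_double -ltnS.
apply: monic_dvdp_eq.
- by rewrite monicMl ?monicXaddC ?monic_prod_recip_quad.
- exact: monicXnaddC.
- by rewrite Gauss_dvdp // XaddC_dvdp prod_recip_quad_dvdp.
rewrite size_monicM ?monicXaddC ?(monic_neq0 (monic_prod_recip_quad _ _)) // size_XaddC.
by rewrite size_prod_recip_quad /f size_XnaddC Nk; lia.
Qed.

Lemma cpoly_pairfac j : cpoly (pairfac 1 N j) = recip_quad (cosC j).
Proof.
rewrite /pairfac pmul_pXsub_Cexpi psi_root_angle /= cplx1 cplx_RtoC.
have -> : (- (2 * cos (root_angle N j)))%:C = - (2%:R * cosC j).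
  by rewrite -realC2 -rmorphM -rmorphN.
by rewrite /recip_quad polyCN; ring.
Qed.

Lemma eq_cheb_quot0 E : E * recip_quad (cosC 0) = f -> E = cheb_quot 0.
Proof.
by move=> E_mul; apply: (mulIf (recip_quad_neq0 (cosC 0))); rewrite E_mul cheb_quot_mul.
Qed.

(* [eta] only contains the factors j = 1, ..., m; [recip_quad (cosC 0)] is the missing one. *)
Lemma cpoly_eta : cpoly (eta 1 N) = 'X * cheb_quot 0.
Proof.
rewrite /eta; case: (Nat.Even_or_Odd N) => [[k Nk] | [k Nk]].
- have -> : Nat.even N = true by rewrite Nk Nat.even_mul.
  have [m Nm] : exists m, N = (m.*2).+2 by exists k.-1; lia.
  have -> : Nat.div (Nat.sub N 2) 2 = m.
    by rewrite Nm (_ : Nat.sub _ 2 = Nat.mul m 2) ?Nat.div_mul //; lia.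
  rewrite !cpoly_pmul cpoly_pprod1 cpoly_pX cpoly_pXsub cplx_opp cplx1 polyCN opprK.
  under eq_bigr do rewrite cpoly_pairfac.
  rewrite polyC1 -mulrA; apply: congr1; apply: eq_cheb_quot0.
  by rewrite -(prod_recip_quad_even _ Nm) big_ord_recl -mulrA [_ * recip_quad _]mulrC.
have -> : Nat.even N = false by rewrite Nk Nat.even_add Nat.even_mul.
have {}Nk : N = (k.*2).+1 by lia.
have -> : Nat.div (Nat.sub N 1) 2 = k.
  by rewrite Nk (_ : Nat.sub _ 1 = Nat.mul k 2) ?Nat.div_mul //; lia.
rewrite cpoly_pmul cpoly_pprod1 cpoly_pX.
under eq_bigr do rewrite cpoly_pairfac.
apply: congr1; apply: eq_cheb_quot0.
by rewrite -(prod_recip_quad_odd _ Nk) big_ord_recl mulrC.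
Qed.

(* (1/T + N) eta/z - eta' = (N+1) E - (z E)' = N E - z E' for eta = z E, T = 1. *)
Lemma cpoly_q K : cpoly (q 1 N K) = (cplx K / N.+1%:R) *: euler_shift N (cheb_quot 0).
Proof.
rewrite /q cpoly_pscale cpoly_padd !cpoly_pscale cpoly_pderiv (cpoly_pdivX _ _ cpoly_eta).
rewrite cpoly_eta cplx_mul !cplx_RtoC cplx_opp cplx1 q_scale_T1 q_weight_T1.
rewrite RinvE fmorphV INRE !rmorph_nat /euler_shift derivM derivX mul1r.
congr (_ *: _); rewrite -!mul_polyC polyCN polyC1 !polyC_natr -[N.+1]addn1 natrD.
by ring.
Qed.

Lemma horner_euler_shift_unit x : x ^+ 2 = 1 ->
  (euler_shift N (cheb_quot 0)).[x] * (recip_quad (cosC 0)).[x] = N.+1%:R.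
Proof.
move=> x2; apply: horner_euler_shift; last exact: recip_quad_deriv_unit.
exact: cheb_quot_mul.
Qed.

Lemma horner_recip_quad0_1 :
  (recip_quad (cosC 0)).[1] = (2 - 2 * cos (root_angle N 0))%:C.
Proof.
have -> : (recip_quad (cosC 0)).[1] = 2%:R - 2%:R * cosC 0 by rewrite !hornerE expr1n; ring.
by rewrite -realC2 -rmorphM -rmorphB.
Qed.

Lemma horner_recip_quad0_N1 :
  (recip_quad (cosC 0)).[-1] = (2 + 2 * cos (root_angle N 0))%:C.
Proof.
have -> : (recip_quad (cosC 0)).[-1] = 2%:R + 2%:R * cosC 0 by rewrite !hornerE sqrrN expr1n; ring.
by rewrite -realC2 -rmorphM -rmorphD.
Qed.

Section Normalized.
Variable K : Cx.
Hypothesis q1 : peval (q 1 N K) Cone = Cone.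

Lemma q_normalizer : cplx K = (recip_quad (cosC 0)).[1].
Proof.
have := congr1 cplx q1; rewrite horner_cpoly cpoly_q hornerZ cplx1 => kG1.
have GD := horner_euler_shift_unit 1 (expr1n _ _).
have n1_neq0 : N.+1%:R != 0 :> R[i] by rewrite pnatr_eq0.
have G1_neq0 : (euler_shift N (cheb_quot 0)).[1] != 0.
  by apply: contra_eq_neq GD => ->; rewrite mul0r eq_sym.
apply: (mulIf G1_neq0); rewrite [RHS]mulrC GD.
by rewrite -[cplx K](divfK n1_neq0) mulrAC kG1 mul1r.
Qed.

Lemma q_T1_expansion z :
  peval (q 1 N K) z =
  Cmul (RtoC (2 * tan (PI / (2 * (INR N + 1)))))
    (Csum1 N (fun j =>
       Cmul (RtoC ((1 - INR j / (INR N + 1)) * sin (PI * INR j / (INR N + 1))))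
            (Cpow z (j - 1)))).
Proof.
apply: cplx_inj; rewrite horner_cpoly cpoly_q q_normalizer horner_recip_quad0_1.
rewrite /cheb_quot hornerZ (euler_shift_sum _ _ (fun i => (chebU (root_angle N 0) i.+1)%:C)).
rewrite horner_sum mulr_sumr cplx_mul cplx_RtoC cplx_sum mulr_sumr; apply: eq_bigr => i _.
rewrite cplx_mul cplx_RtoC cplx_pow hornerCM hornerXn subn1 mulrA [RHS]mulrA.
congr (_ * _); rewrite -rmorphM -!(rmorph_nat (real_complex R)).
rewrite -(INRE N) -(INRE i) -(INRE N.+1).
rewrite -rmorphB -fmorph_div -!rmorphM; congr (_%:C); exact: q_coef_eq.
Qed.

Lemma q_T1_at_N1 :
  peval (q 1 N K) (Copp Cone) = RtoC (tan (PI / (2 * (INR N + 1))) ^ 2).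
Proof.
have GD := horner_euler_shift_unit (-1) (etrans (sqrrN 1) (expr1n _ _)).
have G_neq0 : (euler_shift N (cheb_quot 0)).[-1] != 0.
  by apply: contra_eq_neq GD => ->; rewrite mul0r eq_sym pnatr_eq0.
apply: cplx_inj; rewrite horner_cpoly cpoly_q q_normalizer hornerZ cplx_opp cplx1.
rewrite -GD invfM mulrA mulrAC mulfVK // horner_recip_quad0_1 horner_recip_quad0_N1.
rewrite cplx_RtoC -fmorph_div; congr (_%:C); rewrite root_angle0.
by apply: tan_sqr_half; apply/Rgt_not_eq/cos_half_angle_gt0.
Qed.
End Normalized.

End Main.

Theorem mainTheorem4 (N : nat) (HN : (1 <= N)%coq_nat) (K : Cx)
  (HK : peval (q 1 N K) Cone = Cone) :
  (forall z : Cx,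
     peval (q 1 N K) z =
     Cmul (RtoC (2 * tan (PI / (2 * (INR N + 1)))))
       (Csum1 N (fun j =>
          Cmul (RtoC ((1 - INR j / (INR N + 1)) * sin (PI * INR j / (INR N + 1))))
               (Cpow z (j - 1)))))
  /\ peval (q 1 N K) (Copp Cone) = RtoC (tan (PI / (2 * (INR N + 1))) ^ 2).
Proof.
have N_gt0 : (0 < N)%nat by apply/leP.
by split; [exact: q_T1_expansion | exact: q_T1_at_N1].
Qed.
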